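(* Let $n\ge2$ and $M\in M_n(k)$. Identify a DG algebra automorphism $f$ of $\mathcal{A}_{\mathcal{O}_{-1}(k^n)}(M)$ with the matrix $C=(c_{ij})\in\mathrm{GL}_n(k)$ given by $f(x_i)=\sum_j c_{ij}x_j$. Under this identification, $$\mathrm{Aut}_{dg}\,\mathcal{A}_{\mathcal{O}_{-1}(k^n)}(M)=\{C=(c_{ij})_{n\times n}\in\mathrm{QPL}_n(k)\mid M=C^{-1}M(c_{ij}^2)_{n\times n}\}.$$
   Context: $k$ is an algebraically closed field of characteristic zero. For $M=(m_{ij})\in M_n(k)$, $\mathcal{A}_{\mathcal{O}_{-1}(k^n)}(M)$ is the connected cochain DG algebra whose underlying graded algebra is generated by degree-one $x_1,\dots,x_n$ subject to $x_ix_j=-x_jx_i$ ($i<j$), with differential determined by $\partial(x_i)=\sum_j m_{ij}x_j^2$ and the Leibniz rule. $\mathrm{Aut}_{dg}$ denotes the group of DG algebra automorphisms (graded algebra automorphisms commuting with the differential). $\mathrm{QPL}_n(k)$ is the group of invertible $n\times n$ matrices with exactly one nonzero entry in each row and each column; $(c_{ij}^2)$ is the matrix of entrywise squares. *)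

From HB Require Import structures.
From mathcomp Require Import all_boot all_order all_algebra.
From mathcomp Require Import mpoly.
Set Implicit Arguments. Unset Strict Implicit. Unset Printing Implicit Defensive.
Import GRing.Theory.
Local Open Scope ring_scope.

(* Concrete model of the skew polynomial algebra O_{-1}(k^n):
   k-basis = ordered monomials x^a = x_1^{a_1} ... x_n^{a_n}, stored as
   {mpoly k[n]} (only its vector space / monomial structure is used);
   product x^a * x^b = (-1)^(sum_{i>j} a_i b_j) x^(a+b). *)

Definition tsign (n : nat) (a b : 'X_{1..n}) : nat :=
  (\sum_(i < n) \sum_(j < n | (j < i)%N) (a i * b j))%N.

Definition tmul (k : nzRingType) (n : nat) (p q : {mpoly k[n]}) : {mpoly k[n]} :=
  \sum_(a <- msupp p) \sum_(b <- msupp q)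
     ((p@_a * q@_b * (-1) ^+ tsign a b) *: 'X_[a + b]).

Definition is_homog (k : nzRingType) (n : nat) (d : nat) (p : {mpoly k[n]}) : Prop :=
  forall m, m \in msupp p -> mdeg m = d.

Definition is_diff (k : nzRingType) (n : nat) (M : 'M[k]_n)
    (d : {mpoly k[n]} -> {mpoly k[n]}) : Prop :=
  [/\ forall (c : k) p q, d (c *: p + q) = c *: d p + d q,
      forall (e : nat) p q, is_homog e p ->
        d (tmul p q) = tmul (d p) q + (-1) ^+ e *: tmul p (d q)
    & forall i : 'I_n, d 'X_i = \sum_(j < n) M i j *: tmul 'X_j 'X_j].

Definition is_dg_aut (k : nzRingType) (n : nat)
    (d f : {mpoly k[n]} -> {mpoly k[n]}) : Prop :=
  [/\ bijective f,
      forall (c : k) p q, f (c *: p + q) = c *: f p + f q,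
      f 1 = 1 /\
      forall p q, f (tmul p q) = tmul (f p) (f q),
      forall (e : nat) p, is_homog e p -> is_homog e (f p)
    & forall p, f (d p) = d (f p)].

Definition represents (k : nzRingType) (n : nat)
    (f : {mpoly k[n]} -> {mpoly k[n]}) (C : 'M[k]_n) : Prop :=
  forall i : 'I_n, f 'X_i = \sum_(j < n) C i j *: 'X_j.

Definition QPL (k : comUnitRingType) (n : nat) (C : 'M[k]_n) : Prop :=
  [/\ C \in unitmx,
      forall i, #|[set j | C i j != 0]| = 1%N
    & forall j, #|[set i | C i j != 0]| = 1%N].

From HB Require Import structures.
From mathcomp Require Import all_boot all_order all_algebra all_fingroup.
From mathcomp Require Import mpoly.
From mathcomp Require Import ring.
Import GRing.Theory.
Local Open Scope ring_scope.
Set Implicit Arguments. Unset Strict Implicit. Unset Printing Implicit Defensive.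

(* Being degree preserving, f is given on generators by f(x_i) = sum_j c_ij x_j.
   Applying f to x_i x_i' + x_i' x_i = 0 (i <> i') gives sum_l 2 c_il c_i'l x_l^2 = 0,
   so distinct rows of C have disjoint supports; no row vanishes since f is
   injective, hence C is a monomial matrix, i.e. C is in QPL_n(k).  Both f(d x_i)
   and d(f x_i) are combinations of the squares x_l^2, with coefficient rows the
   i-th rows of M (c_ij^2) and C M respectively, so f commutes with d on the
   generators iff M (c_ij^2) = C M.
   Conversely, for a monomial matrix with f(x_i) = c_i x_(s i), put
   f(x^a) = c^a (-1)^inv(a) x^(s a), where inv(a) = sum a_i a_j over the pairs
   j < i with s i < s j counts the transpositions needed to reorder the image of
   x^a; a parity count makes f multiplicative for the skew product, and the
   Leibniz rule propagates the commutation with d from the generators to all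
   monomials by induction on the degree. *)

Section LinearExtension.
Variables (k : comNzRingType) (n : nat).
Implicit Types (p q : {mpoly k[n]}) (a b : 'X_{1..n}) (G : 'X_{1..n} -> {mpoly k[n]}).

Definition mlinext G p : {mpoly k[n]} := \sum_(a <- msupp p) p@_a *: G a.

Lemma mlinext_sub G p (s : seq 'X_{1..n}) : uniq s -> {subset msupp p <= s} ->
  mlinext G p = \sum_(a <- s) p@_a *: G a.
Proof.
move=> s_uniq sub_ps; rewrite [RHS](bigID (mem (msupp p))) /=.
rewrite [X in _ + X]big1 ?addr0; last by move=> a /memN_msupp_eq0 ->; rewrite scale0r.
rewrite -big_filter; apply/perm_big/uniq_perm; rewrite ?filter_uniq ?msupp_uniq //.
by move=> a; rewrite mem_filter andb_idr //; apply: sub_ps.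
Qed.

Lemma mlinext_is_linear G : linear (mlinext G).
Proof.
move=> c p q; set s := undup (msupp p ++ msupp q).
have sub_p : {subset msupp p <= s} by move=> a pa; rewrite mem_undup mem_cat pa.
have sub_q : {subset msupp q <= s} by move=> a qa; rewrite mem_undup mem_cat qa orbT.
have sub_cpq : {subset msupp (c *: p + q) <= s}.
  by move=> a /msuppD_le; rewrite mem_cat => /orP[/msuppZ_le/sub_p | /sub_q].
rewrite !(@mlinext_sub G _ s) ?undup_uniq // scaler_sumr -big_split.
by apply: eq_bigr => a _; rewrite mcoeffD mcoeffZ scalerDl scalerA.
Qed.

HB.instance Definition _ G :=
  GRing.isLinear.Build k {mpoly k[n]} {mpoly k[n]} _ (mlinext G) (mlinext_is_linear G).

Lemma mlinextX G a : mlinext G 'X_[a] = G a.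
Proof. by rewrite /mlinext msuppX big_seq1 mcoeffX eqxx scale1r. Qed.

Lemma mlinext_mpolyX p : mlinext (fun a => 'X_[a]) p = p.
Proof. by rewrite [RHS]mpolyE. Qed.

Lemma eq_mlinext G G' p : G =1 G' -> mlinext G p = mlinext G' p.
Proof. by move=> eqG; apply: eq_bigr => a _; rewrite eqG. Qed.

Lemma linear_mlinext (g : {linear {mpoly k[n]} -> {mpoly k[n]}}) G p :
  g (mlinext G p) = mlinext (fun a => g (G a)) p.
Proof. by rewrite linear_sum; apply: eq_bigr => a _; rewrite linearZ. Qed.

Lemma linear_mlinextX (g : {linear {mpoly k[n]} -> {mpoly k[n]}}) p :
  g p = mlinext (fun a => g 'X_[a]) p.
Proof. by rewrite -linear_mlinext mlinext_mpolyX. Qed.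

Lemma homog_mlinext e G p : (forall a, mdeg a = e -> is_homog e (G a)) ->
  is_homog e p -> is_homog e (mlinext G p).
Proof.
move=> homG homp m /msupp_sum_le/flattenP[t /mapP[a]].
rewrite mem_filter /= => pa -> /msuppZ_le; exact: homG (homp a pa) m.
Qed.

End LinearExtension.

Section BilinearForm.
Variable n : nat.
Implicit Types (w : 'I_n -> 'I_n -> nat) (a b : 'X_{1..n}).

Definition bform w a b := (\sum_(i < n) \sum_(j < n) w i j * a i * b j)%N.

Lemma bformDl w a a' b : bform w (a + a')%MM b = (bform w a b + bform w a' b)%N.
Proof.
rewrite /bform -big_split; apply: eq_bigr => i _ /=.
by rewrite -big_split; apply: eq_bigr => j _ /=; rewrite mnmDE mulnDr mulnDl.
Qed.

Lemma bformDr w a b b' : bform w a (b + b')%MM = (bform w a b + bform w a b')%N.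
Proof.
rewrite /bform -big_split; apply: eq_bigr => i _ /=.
by rewrite -big_split; apply: eq_bigr => j _ /=; rewrite mnmDE mulnDr.
Qed.

Lemma bformDw w w' a b :
  (bform w a b + bform w' a b)%N = bform (fun i j => w i j + w' i j)%N a b.
Proof.
rewrite /bform -big_split; apply: eq_bigr => i _ /=.
by rewrite -big_split; apply: eq_bigr => j _ /=; rewrite !mulnDl.
Qed.

Lemma bformC w a b : bform w b a = bform (fun i j => w j i) a b.
Proof.
rewrite /bform exchange_big; apply: eq_bigr => i _; apply: eq_bigr => j _ /=.
by rewrite mulnAC.
Qed.

Lemma bform0l w b : bform w 0%MM b = 0%N.
Proof. by apply: big1 => i _; apply: big1 => j _; rewrite mnm0E muln0 mul0n. Qed.

Lemma bformU w (i j : 'I_n) : bform w U_(i)%MM U_(j)%MM = w i j.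
Proof.
rewrite /bform (bigD1 i) //= [X in (_ + X)%N]big1 ?addn0; last first.
  by move=> i' ne; apply: big1 => j' _; rewrite mnm1E eq_sym (negbTE ne) muln0 mul0n.
rewrite (bigD1 j) //= [X in (_ + X)%N]big1 ?addn0; last first.
  by move=> j' ne; rewrite !mnm1E eq_sym (negbTE ne) muln0.
by rewrite !mnm1E !eqxx !muln1.
Qed.

Lemma sign_bform_odd (R : nzRingType) w w' a b :
  (forall i j, odd (w i j) = odd (w' i j)) ->
  (-1) ^+ bform w a b = (-1) ^+ bform w' a b :> R.
Proof.
move=> oddw; rewrite !expr_sum; apply: eq_bigr => i _; rewrite !expr_sum.
apply: eq_bigr => j _; rewrite -!mulnA !exprM.
by rewrite -(signr_odd _ (w i j)) -(signr_odd _ (w' i j)) oddw.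
Qed.

Lemma tsign_bform a b : tsign a b = bform (fun i j => (j < i)%N : nat) a b.
Proof.
apply: eq_bigr => i _; rewrite big_mkcond; apply: eq_bigr => j _ /=.
by case: (j < i)%N; rewrite ?mul1n ?mul0n.
Qed.

End BilinearForm.

Section SkewProduct.
Variables (k : comNzRingType) (n : nat).
Implicit Types (p q : {mpoly k[n]}) (a b : 'X_{1..n}).

Lemma tmul_mlinextl p q : tmul p q =
  mlinext (fun a => mlinext (fun b => (-1) ^+ tsign a b *: 'X_[a + b]) q) p.
Proof.
rewrite /tmul /mlinext; apply: eq_bigr => a _; rewrite scaler_sumr.
by apply: eq_bigr => b _; rewrite !scalerA.
Qed.

Lemma tmul_mlinextr p q : tmul p q =
  mlinext (fun b => mlinext (fun a => (-1) ^+ tsign a b *: 'X_[a + b]) p) q.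
Proof.
rewrite /tmul /mlinext exchange_big; apply: eq_bigr => b _; rewrite scaler_sumr.
by apply: eq_bigr => a _; rewrite !scalerA [q@_b * _]mulrC.
Qed.

Lemma tmulZl c p q : tmul (c *: p) q = c *: tmul p q.
Proof. by rewrite !tmul_mlinextl linearZ. Qed.

Lemma tmulZr c p q : tmul p (c *: q) = c *: tmul p q.
Proof. by rewrite !tmul_mlinextr linearZ. Qed.

Lemma tmul_suml (I : Type) (r : seq I) (F : I -> {mpoly k[n]}) q :
  tmul (\sum_(i <- r) F i) q = \sum_(i <- r) tmul (F i) q.
Proof. by rewrite tmul_mlinextl linear_sum; apply: eq_bigr => i _; rewrite tmul_mlinextl. Qed.

Lemma tmul_sumr (I : Type) (r : seq I) (F : I -> {mpoly k[n]}) p :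
  tmul p (\sum_(i <- r) F i) = \sum_(i <- r) tmul p (F i).
Proof. by rewrite tmul_mlinextr linear_sum; apply: eq_bigr => i _; rewrite tmul_mlinextr. Qed.

Lemma tmulXX a b :
  tmul 'X_[a] 'X_[b] = (-1) ^+ tsign a b *: 'X_[a + b] :> {mpoly k[n]}.
Proof. by rewrite tmul_mlinextl !mlinextX. Qed.

Lemma tmul_expand p q : tmul p q =
  \sum_(a <- msupp p) \sum_(b <- msupp q) (p@_a * q@_b) *: tmul 'X_[a] 'X_[b].
Proof. by apply: eq_bigr => a _; apply: eq_bigr => b _; rewrite tmulXX scalerA. Qed.

Lemma tmul_morph_mpolyX (g : {linear {mpoly k[n]} -> {mpoly k[n]}}) :
  (forall a b, g (tmul 'X_[a] 'X_[b]) = tmul (g 'X_[a]) (g 'X_[b])) ->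
  forall p q, g (tmul p q) = tmul (g p) (g q).
Proof.
move=> gXX p q; rewrite tmul_expand linear_sum (linear_mlinextX g p) (linear_mlinextX g q).
rewrite tmul_suml; apply: eq_bigr => a _; rewrite linear_sum tmulZl tmul_sumr scaler_sumr.
by apply: eq_bigr => b _; rewrite linearZ tmulZr gXX scalerA.
Qed.

Lemma tmul1l p : tmul 1 p = p.
Proof.
rewrite -mpolyX0 tmul_mlinextl mlinextX [RHS]mpolyE.
by apply: eq_bigr => b _; rewrite tsign_bform bform0l scale1r add0m.
Qed.

Lemma tmul1r p : tmul p 1 = p.
Proof.
rewrite -mpolyX0 tmul_mlinextr mlinextX [RHS]mpolyE.
by apply: eq_bigr => a _; rewrite tsign_bform bformC bform0l scale1r addm0.
Qed.

Lemma tmul_var (i j : 'I_n) :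
  tmul 'X_i 'X_j = (-1) ^+ (j < i)%N *: 'X_[U_(i) + U_(j)] :> {mpoly k[n]}.
Proof. by rewrite tmulXX tsign_bform bformU. Qed.

Lemma tmul_var_sq (i : 'I_n) : tmul 'X_i 'X_i = 'X_[U_(i) + U_(i)] :> {mpoly k[n]}.
Proof. by rewrite tmul_var ltnn scale1r. Qed.

Lemma tmul_var_anticomm (i j : 'I_n) : tmul 'X_i 'X_j + tmul 'X_j 'X_i =
  ((i == j)%:R *+ 2) *: 'X_[U_(i) + U_(j)] :> {mpoly k[n]}.
Proof.
rewrite !tmul_var [(U_(j) + _)%MM]addmC -scalerDl; congr (_ *: _).
case: (ltngtP i j) => [ij|ji|/val_inj->]; last by rewrite eqxx mulr2n.
- by rewrite -val_eqE (ltn_eqF ij) /= expr0 expr1 addrN mul0rn.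
- by rewrite -val_eqE (gtn_eqF ji) /= expr0 expr1 addNr mul0rn.
Qed.

End SkewProduct.

Arguments tmulXX {k n}.
Arguments tmul_var {k n}.
Arguments tmul_var_sq {k n}.
Arguments tmul_var_anticomm {k n}.

Section LinearForms.
Variables (k : comNzRingType) (n : nat).
Implicit Types (a b c : 'I_n -> k) (p : {mpoly k[n]}).

Definition linform a : {mpoly k[n]} := \sum_i a i *: 'X_i.

Definition sqform c : {mpoly k[n]} := \sum_l c l *: 'X_[U_(l) + U_(l)].

Lemma homog_var (i : 'I_n) : is_homog 1 ('X_i : {mpoly k[n]}).
Proof. by move=> m /mem_msuppXP <-; rewrite mdeg1. Qed.

Lemma homog1_linform p : is_homog 1 p -> p = linform (fun j => p@_U_(j)).
Proof.
move=> homp; rewrite -[LHS]mlinext_mpolyX (@mlinext_sub _ _ _ p [seq U_(j)%MM | j : 'I_n]).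
- by rewrite big_map big_enum.
- by rewrite map_inj_uniq ?enum_uniq // => i j /eqP; rewrite eq_mnm1 => /eqP.
by move=> a /homp /eqP /mdeg1P [j /eqP ->]; apply: map_f; rewrite mem_enum.
Qed.

Lemma tmul_linform a b : tmul (linform a) (linform b) =
  \sum_i \sum_j (a i * b j) *: tmul 'X_i 'X_j.
Proof.
rewrite tmul_suml; apply: eq_bigr => i _; rewrite tmulZl tmul_sumr scaler_sumr.
by apply: eq_bigr => j _; rewrite tmulZr scalerA.
Qed.

Lemma tmul_linform_anticomm a b :
  tmul (linform a) (linform b) + tmul (linform b) (linform a) =
  sqform (fun l => a l * b l *+ 2).
Proof.
rewrite !tmul_linform [X in _ + X]exchange_big -big_split; apply: eq_bigr => i _ /=.
rewrite -big_split /= (bigD1 i) //= big1 ?addr0 => [|j ji].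
  by rewrite [b i * a i]mulrC -scalerDr tmul_var_anticomm eqxx scalerA mulrnAr mulr1.
rewrite [b j * a i]mulrC -scalerDr tmul_var_anticomm eq_sym (negbTE ji).
by rewrite mul0rn scale0r scaler0.
Qed.

Lemma mcoeff_sqform c (l : 'I_n) : (sqform c)@_(U_(l) + U_(l)) = c l.
Proof.
have UU_inj (j : 'I_n) : (U_(j) + U_(j) == U_(l) + U_(l))%MM = (j == l).
  apply/eqP/eqP => [/mnmP/(_ l)|-> //]; rewrite !mnmDE !mnm1E eqxx.
  by case: eqP.
rewrite raddf_sum (bigD1 l) //= big1 ?addr0 => [|j jl].
  by rewrite mcoeffZ mcoeffX eqxx mulr1.
by rewrite mcoeffZ mcoeffX UU_inj (negbTE jl) mulr0.
Qed.

Lemma sqform_inj c c' : sqform c = sqform c' -> c =1 c'.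
Proof. by move=> eq_cc' l; rewrite -mcoeff_sqform eq_cc' mcoeff_sqform. Qed.

End LinearForms.

Arguments homog_var {k n} i.

Lemma tmul_linform_sq (k : fieldType) (n : nat) (a : 'I_n -> k) :
  (2%:R : k) != 0 -> tmul (linform a) (linform a) = sqform (fun l => a l ^+ 2).
Proof.
move=> two; apply: (scalerI two); rewrite scaler_nat mulr2n tmul_linform_anticomm.
rewrite /sqform scaler_sumr; apply: eq_bigr => l _.
by rewrite scalerA mulr_natl expr2.
Qed.

Section Differential.
Variables (k : comNzRingType) (n : nat) (M : 'M[k]_n).
Variable d : {mpoly k[n]} -> {mpoly k[n]}.
Hypothesis d_diff : is_diff M d.

Lemma diff_linear : linear d.
Proof. by case: d_diff. Qed.

HB.instance Definition _ := GRing.isLinear.Build k _ _ _ d diff_linear.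

Lemma diff_tmul e p q : is_homog e p ->
  d (tmul p q) = tmul (d p) q + (-1) ^+ e *: tmul p (d q).
Proof. by case: d_diff => _ + _; apply. Qed.

Lemma diff_var (i : 'I_n) : d 'X_i = sqform (M i).
Proof. by case: d_diff => _ _ ->; apply: eq_bigr => l _; rewrite tmul_var_sq. Qed.

Lemma diff1 : d 1 = 0.
Proof.
have homog_1 : is_homog 0 (1 : {mpoly k[n]}).
  by move=> m; rewrite -mpolyX0 => /mem_msuppXP <-; rewrite mdeg0.
have /eqP := diff_tmul 1 homog_1; rewrite tmul1l tmul1r scale1r tmul1l.
by rewrite -{1}[d 1]addr0 => /eqP/addrI <-.
Qed.

Section Commutation.
Variable f : {mpoly k[n]} -> {mpoly k[n]}.
Hypotheses (f_linear : linear f) (f1 : f 1 = 1).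
Hypothesis f_tmul : forall p q, f (tmul p q) = tmul (f p) (f q).
Hypothesis homog_f_var : forall i, is_homog 1 (f 'X_i).
Hypothesis f_diff_var : forall i, f (d 'X_i) = d (f 'X_i).

HB.instance Definition _ := GRing.isLinear.Build k _ _ _ f f_linear.

Lemma commute_diff_mpolyX a : f (d 'X_[a]) = d (f 'X_[a]).
Proof.
have [N] := ubnP (mdeg a); elim: N a => // N IH a lt_aN.
case: (pickP (fun i => a i != 0%N)) => [i ai_neq0 | a_eq0]; last first.
  have -> : a = 0%MM by apply/mnmP => i; rewrite mnm0E; apply/eqP/negbFE/a_eq0.
  by rewrite mpolyX0 diff1 linear0 f1 diff1.
set a' := (a - U_(i))%MM.
have def_a : a = (U_(i) + a')%MM by rewrite addmC submK // lep1mP.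
have lt_a'N : (mdeg a' < N)%N by move: lt_aN; rewrite def_a mdegD mdeg1.
have -> : 'X_[a] = (-1) ^+ tsign U_(i) a' *: tmul 'X_i 'X_[a'] :> {mpoly k[n]}.
  by rewrite tmulXX scalerA -expr2 sqrr_sign scale1r -def_a.
rewrite !linearZ /= (diff_tmul _ (homog_var i)) f_tmul (diff_tmul _ (@homog_f_var i)).
by rewrite linearD linearZ /= !f_tmul f_diff_var IH.
Qed.

Lemma commute_diff p : f (d p) = d (f p).
Proof.
rewrite -[p]mlinext_mpolyX !linear_sum; apply: eq_bigr => a _.
by rewrite !linearZ /= commute_diff_mpolyX.
Qed.

End Commutation.
End Differential.

Section MonomialMatrix.
Variables (k : fieldType) (n : nat).
Implicit Types C : 'M[k]_n.

Definition monomial_mx C (s : {perm 'I_n}) := forall i j, (C i j != 0) = (j == s i).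

Lemma monomial_mx_eq0 C s i j : monomial_mx C s -> j != s i -> C i j = 0.
Proof. by move=> C_s js; apply/eqP/negbFE; rewrite C_s (negbTE js). Qed.

Lemma monomial_mx_exists C :
  (forall i, exists j, C i j != 0) ->
  (forall i i' j, i != i' -> C i j * C i' j = 0) ->
  exists s, monomial_mx C s.
Proof.
move=> row_nz col_orth.
have supp i : {j | C i j != 0} by apply: sigW; apply: row_nz.
pose s i := sval (supp i).
have Cs i : C i (s i) != 0 by rewrite /s; case: (supp i).
have s_inj : injective s.
  move=> i i' eq_s; apply/eqP/negPn/negP => ii'.
  by have /eqP := col_orth _ _ (s i) ii'; rewrite mulf_eq0 {2}eq_s !(negbTE (Cs _)).
exists (perm s_inj) => i j; rewrite permE.
apply/idP/eqP => [Cij | -> //]; set i' := ((perm s_inj)^-1)%g j.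
have def_j : j = s i' by rewrite -[LHS](permKV (perm s_inj)) permE.
have [-> | ii'] := eqVneq i i'; first exact: def_j.
have /eqP := col_orth _ _ j ii'.
by rewrite mulf_eq0 (negbTE Cij) def_j (negbTE (Cs i')).
Qed.

Lemma monomial_mx_QPL C s : monomial_mx C s -> QPL C.
Proof.
move=> C_s; have C0 := monomial_mx_eq0 C_s; split.
- pose D := \matrix_(j, i) (C i j)^-1.
  suff : C *m D = 1%:M by case/mulmx1_unit.
  apply/matrixP => i i'; rewrite !mxE (bigD1 (s i)) //= big1 ?addr0 => [|j js]; last first.
    by rewrite C0 ?mul0r.
  rewrite mxE; have [<- | ii'] := eqVneq i i'; first by rewrite divff // C_s.
  by rewrite (C0 i' (s i)) ?invr0 ?mulr0 // (inj_eq perm_inj).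
- by move=> i; apply/eqP/cards1P; exists (s i); apply/setP => j; rewrite !inE C_s.
- move=> j; apply/eqP/cards1P; exists ((s^-1)%g j); apply/setP => i.
  by rewrite !inE C_s eq_sym (canF_eq (permK s)).
Qed.

Lemma QPL_monomial_mx C : QPL C -> exists s, monomial_mx C s.
Proof.
case=> _ row col; apply: monomial_mx_exists => [i | i i' j ii'].
  have /cards1P [j Ci] : #|[set j | C i j != 0]| == 1%N by rewrite row.
  by exists j; move: (set11 j); rewrite -Ci inE.
have /cards1P [i0 Cj] : #|[set i | C i j != 0]| == 1%N by rewrite col.
have supp_j i1 : C i1 j != 0 -> i1 = i0 by move=> Ci1j; apply/set1P; rewrite -Cj inE.
by apply/eqP; rewrite mulf_eq0; apply: contraR ii' => /norP[/supp_j-> /supp_j->].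
Qed.

End MonomialMatrix.

Lemma sum_scale_sqform (k : comNzRingType) (n : nat) (x : 'I_n -> k) (c : 'I_n -> 'I_n -> k) :
  \sum_j x j *: sqform (c j) = sqform (fun l => \sum_j x j * c j l).
Proof.
rewrite /sqform; under eq_bigr do rewrite scaler_sumr.
rewrite exchange_big; apply: eq_bigr => l _ /=; rewrite scaler_suml.
by apply: eq_bigr => j _; rewrite scalerA.
Qed.

Definition sqmx (k : nzRingType) (n : nat) (C : 'M[k]_n) := map_mx (fun c => c ^+ 2) C.

Section AlgebraMapOnGenerators.
Variables (k : fieldType) (n : nat) (M : 'M[k]_n).
Variable d : {mpoly k[n]} -> {mpoly k[n]}.
Hypothesis d_diff : is_diff M d.
Variables (f : {mpoly k[n]} -> {mpoly k[n]}) (C : 'M[k]_n).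
Hypotheses (f_linear : linear f) (f_C : represents f C).
Hypothesis f_tmul : forall p q, f (tmul p q) = tmul (f p) (f q).

HB.instance Definition _ := GRing.isLinear.Build k _ _ _ f f_linear.
HB.instance Definition _ := GRing.isLinear.Build k _ _ _ d (diff_linear d_diff).

Lemma map_diff_var (two : (2%:R : k) != 0) i : f (d 'X_i) = sqform ((M *m sqmx C) i).
Proof.
rewrite (diff_var d_diff) /sqform linear_sum.
under eq_bigr do rewrite linearZ /= -tmul_var_sq f_tmul f_C tmul_linform_sq //.
rewrite sum_scale_sqform; apply: eq_bigr => l _; rewrite !mxE.
by congr (_ *: _); apply: eq_bigr => j _; rewrite mxE.
Qed.

Lemma diff_map_var i : d (f 'X_i) = sqform ((C *m M) i).
Proof.
rewrite f_C linear_sum; under eq_bigr do rewrite linearZ /= (diff_var d_diff).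
by rewrite sum_scale_sqform; apply: eq_bigr => l _; rewrite !mxE.
Qed.

End AlgebraMapOnGenerators.

Section DGAutomorphism.
Variables (k : fieldType) (n : nat) (M : 'M[k]_n).
Variable d : {mpoly k[n]} -> {mpoly k[n]}.
Hypotheses (d_diff : is_diff M d) (two : (2%:R : k) != 0).
Variable f : {mpoly k[n]} -> {mpoly k[n]}.
Hypothesis f_aut : is_dg_aut d f.

Lemma dg_aut_linear : linear f. Proof. by case: f_aut. Qed.

HB.instance Definition _ := GRing.isLinear.Build k _ _ _ f dg_aut_linear.

Lemma dg_aut_tmul p q : f (tmul p q) = tmul (f p) (f q).
Proof. by case: f_aut => _ _ []. Qed.

Lemma dg_aut_represents : represents f (\matrix_(i, j) (f 'X_i)@_U_(j)).
Proof.
case: f_aut => _ _ _ f_homog _ i; rewrite {1}(homog1_linform (f_homog _ _ (homog_var i))).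
by apply: eq_bigr => j _; rewrite mxE.
Qed.

Variable C : 'M[k]_n.
Hypothesis f_C : represents f C.

Lemma dg_aut_col_orth i i' j : i != i' -> C i j * C i' j = 0.
Proof.
move=> ii'; have := congr1 f (tmul_var_anticomm i i').
rewrite (negbTE ii') mul0rn scale0r linear0 linearD /= !dg_aut_tmul !f_C.
rewrite tmul_linform_anticomm => /(congr1 (mcoeff (U_(j) + U_(j))%MM)).
rewrite mcoeff_sqform mcoeff0 -mulr_natr => /eqP.
by rewrite mulf_eq0 (negbTE two) orbF => /eqP.
Qed.

Lemma dg_aut_row_neq0 i : exists j, C i j != 0.
Proof.
have [j Cij | Ci0] := pickP (fun j => C i j != 0); first by exists j.
have : f 'X_i = f 0.
  by rewrite linear0 f_C big1 // => j _; move/negbFE/eqP: (Ci0 j) ->; rewrite scale0r.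
case: f_aut => [[g fK _]] _ _ _ _ /(can_inj fK)/(congr1 (mcoeff U_(i)%MM)).
by rewrite mcoeffX eqxx mcoeff0 => /eqP; rewrite oner_eq0.
Qed.

Lemma dg_aut_mx_comm : M *m sqmx C = C *m M.
Proof.
apply/matrixP => i l; case: f_aut => _ _ _ _ /(_ 'X_i).
rewrite (map_diff_var d_diff dg_aut_linear f_C dg_aut_tmul two) (diff_map_var d_diff f_C).
by move/sqform_inj; apply.
Qed.

Lemma dg_aut_QPL : QPL C /\ M = invmx C *m M *m sqmx C.
Proof.
have [s C_s] := monomial_mx_exists dg_aut_row_neq0 dg_aut_col_orth.
have C_QPL := monomial_mx_QPL C_s; split => //.
by rewrite -mulmxA dg_aut_mx_comm mulKmx //; case: C_QPL.
Qed.

End DGAutomorphism.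

Section MultinomialPermutation.
Variable n : nat.
Implicit Types (s : {perm 'I_n}) (a b : 'X_{1..n}).

Definition mnm_perm s a : 'X_{1..n} := [multinom a ((s^-1)%g j) | j < n].

Lemma mnm_permE s a i : mnm_perm s a (s i) = a i.
Proof. by rewrite mnmE permK. Qed.

Lemma mnm_permK s : cancel (mnm_perm s) (mnm_perm s^-1).
Proof. by move=> a; apply/mnmP => j; rewrite mnmE invgK mnm_permE. Qed.

Lemma mnm_permKV s : cancel (mnm_perm s^-1) (mnm_perm s).
Proof. by move=> a; rewrite -{1}[s]invgK mnm_permK. Qed.

Lemma mnm_permD s a b : mnm_perm s (a + b) = (mnm_perm s a + mnm_perm s b)%MM.
Proof. by apply/mnmP => j; rewrite !mnmE. Qed.

Lemma mnm_permU s i : mnm_perm s U_(i) = U_(s i)%MM.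
Proof. by apply/mnmP => j; rewrite mnmE !mnm1E -(inj_eq (@perm_inj _ s)) permKV. Qed.

Lemma mdeg_mnm_perm s a : mdeg (mnm_perm s a) = mdeg a.
Proof.
by rewrite !mdegE (reindex_inj (@perm_inj _ s)); apply: eq_bigr => i _; rewrite mnm_permE.
Qed.

Lemma tsign_mnm_perm s a b :
  tsign (mnm_perm s a) (mnm_perm s b) = bform (fun i j => (s j < s i)%N : nat) a b.
Proof.
rewrite tsign_bform /bform (reindex_inj (@perm_inj _ s)); apply: eq_bigr => i _.
by rewrite (reindex_inj (@perm_inj _ s)); apply: eq_bigr => j _; rewrite !mnm_permE.
Qed.

End MultinomialPermutation.

Section MonomialAutomorphism.
Variables (k : fieldType) (n : nat) (s : {perm 'I_n}) (c : 'I_n -> k).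
Hypothesis c_neq0 : forall i, c i != 0.
Implicit Types (a b : 'X_{1..n}) (p q : {mpoly k[n]}).

Definition inversion (i j : 'I_n) : nat := ((j < i) && (s i < s j))%N.

Definition mweight a : k := (\prod_i c i ^+ a i) * (-1) ^+ bform inversion a a.

Definition maut := mlinext (fun a => mweight a *: 'X_[mnm_perm s a]).

Lemma mweight_neq0 a : mweight a != 0.
Proof. by rewrite mulf_neq0 ?signr_eq0 //; apply/prodf_neq0 => i _; rewrite expf_neq0. Qed.

Lemma odd_inversion (i j : 'I_n) :
  odd ((j < i)%N + inversion i j + inversion j i) = (s j < s i)%N.
Proof.
rewrite /inversion; case: (ltngtP i j) => [ij | ji | /val_inj->] /=; rewrite ?ltnn //.
  by rewrite !add0n oddb.
by rewrite addn0 oddb -leqNgt leq_eqVlt val_eqE (inj_eq perm_inj) -val_eqE (ltn_eqF ji).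
Qed.

Lemma mweightD a b : (-1) ^+ tsign a b * mweight (a + b) =
  mweight a * mweight b * (-1) ^+ tsign (mnm_perm s a) (mnm_perm s b).
Proof.
have sign_perm : (-1) ^+ (tsign a b + bform inversion a b + bform inversion b a) =
                 (-1) ^+ tsign (mnm_perm s a) (mnm_perm s b) :> k.
  rewrite tsign_mnm_perm tsign_bform [bform _ b a]bformC !bformDw.
  by apply: sign_bform_odd => i j; rewrite odd_inversion oddb.
rewrite -sign_perm /mweight bformDl !bformDr.
under eq_bigr do rewrite mnmDE exprD.
rewrite big_split /= !exprD; ring.
Qed.

HB.instance Definition _ := GRing.Linear.copy maut (mlinext _).

Lemma mautX a : maut 'X_[a] = mweight a *: 'X_[mnm_perm s a].
Proof. exact: mlinextX. Qed.

Lemma maut_var i : maut 'X_i = c i *: 'X_(s i).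
Proof.
rewrite mautX mnm_permU /mweight bformU /inversion ltnn /= mulr1.
by rewrite (bigD1 i) //= big1 ?mulr1 => [|j ji]; rewrite mnm1E ?eqxx // eq_sym (negbTE ji).
Qed.

Lemma maut1 : maut 1 = 1.
Proof.
rewrite -mpolyX0 mautX /mweight bform0l big1 ?mul1r ?scale1r => [|i _]; last by rewrite mnm0E.
by congr 'X_[_]; apply/mnmP => j; rewrite mnmE !mnm0E.
Qed.

Lemma maut_tmul p q : maut (tmul p q) = tmul (maut p) (maut q).
Proof.
apply: tmul_morph_mpolyX => a b.
by rewrite tmulXX linearZ /= !mautX tmulZl tmulZr tmulXX mnm_permD !scalerA mweightD mulrA.
Qed.

Lemma maut_homog e p : is_homog e p -> is_homog e (maut p).
Proof.
apply: homog_mlinext => a deg_a m /msuppZ_le /mem_msuppXP <-.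
by rewrite mdeg_mnm_perm.
Qed.

Lemma maut_bij : bijective maut.
Proof.
exists (mlinext (fun b => (mweight (mnm_perm s^-1 b))^-1 *: 'X_[mnm_perm s^-1 b])) => p.
  rewrite /maut linear_mlinext -[RHS]mlinext_mpolyX; apply: eq_mlinext => a.
  by rewrite linearZ /= mlinextX mnm_permK scalerA mulfV ?mweight_neq0 ?scale1r.
rewrite linear_mlinext -[RHS]mlinext_mpolyX; apply: eq_mlinext => b.
by rewrite linearZ /= mautX mnm_permKV scalerA mulVf ?mweight_neq0 ?scale1r.
Qed.

End MonomialAutomorphism.

Lemma maut_represents (k : fieldType) (n : nat) (C : 'M[k]_n) s :
  monomial_mx C s -> represents (maut s (fun i => C i (s i))) C.
Proof.
move=> C_s i; rewrite maut_var (bigD1 (s i)) //= big1 ?addr0 // => j js.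
by rewrite (monomial_mx_eq0 C_s js) scale0r.
Qed.

Lemma monomial_mx_dg_aut (k : fieldType) (n : nat) (M : 'M[k]_n)
    (d : {mpoly k[n]} -> {mpoly k[n]}) (C : 'M[k]_n) (s : {perm 'I_n}) :
  is_diff M d -> (2%:R : k) != 0 -> monomial_mx C s -> M *m sqmx C = C *m M ->
  exists f, is_dg_aut d f /\ represents f C.
Proof.
move=> d_diff two C_s eq_MC.
pose f := maut s (fun i => C i (s i)).
have f_C : represents f C := maut_represents C_s.
have f_tmul p q : f (tmul p q) = tmul (f p) (f q) by apply: maut_tmul.
exists f; split => //; split.
- by apply: maut_bij => i; rewrite C_s.
- exact: mlinext_is_linear.
- by split; [apply: maut1 | apply: f_tmul].
- by move=> e p; apply: maut_homog.
apply: (commute_diff d_diff (mlinext_is_linear _) (maut1 _ _) f_tmul).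
  by move=> i; apply: maut_homog; apply: homog_var.
move=> i; rewrite (map_diff_var d_diff (mlinext_is_linear _) f_C f_tmul two).
by rewrite (diff_map_var d_diff f_C) eq_MC.
Qed.

Theorem corollary3p7 (k : closedFieldType) (Hchar : [pchar k] =i pred0)
    (n : nat) (Hn : (2 <= n)%N) (M : 'M[k]_n)
    (d : {mpoly k[n]} -> {mpoly k[n]}) (Hd : is_diff M d) :
  (forall f, is_dg_aut d f -> exists C : 'M[k]_n, represents f C) /\
  (forall C : 'M[k]_n,
     (exists f, is_dg_aut d f /\ represents f C) <->
     (QPL C /\ M = invmx C *m M *m map_mx (fun c => c ^+ 2) C)).
Proof.
(* [Hn] is not needed: the description holds for every [n]. *)
have two : (2%:R : k) != 0 by rewrite (pcharf0P k).1.
split=> [f /dg_aut_represents f_C | C]; first by eexists; apply: f_C.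
split=> [[f [f_aut f_C]] | [C_QPL eq_M]]; first exact: (dg_aut_QPL Hd two f_aut f_C).
have [s C_s] := QPL_monomial_mx C_QPL.
apply: monomial_mx_dg_aut Hd two C_s _.
by case: C_QPL => C_unit _ _; rewrite /sqmx {2}eq_M !mulmxA mulmxV // mul1mx.
Qed.
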